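(* There exists an integer $n_0$ such that for every integer $n\ge n_0$ there exists a regular graph on $n$ vertices that is $K_3$-saturated (that is, $\mathrm{rsat}(n,K_3)$ exists for every $n\ge n_0$).
   Context: All graphs are finite and simple. For a graph $F$, a graph $G$ is $F$-saturated if $G$ contains no copy of $F$ (as a subgraph), but adding any edge between two non-adjacent vertices of $G$ creates a copy of $F$. A graph is regular if all its vertices have the same degree. $\mathrm{rsat}(n,F)$ denotes the smallest number of edges of a regular $n$-vertex $F$-saturated graph, if such a graph exists; we say $\mathrm{rsat}(n,F)$ exists if at least one such graph exists. *)

From mathcomp Require Import all_boot.
Set Implicit Arguments. Unset Strict Implicit. Unset Printing Implicit Defensive.

Definition simple_graph (T : finType) (e : rel T) : Prop :=
  irreflexive e /\ symmetric e.

Definition has_K3 (T : finType) (e : rel T) : Prop :=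
  exists x y z : T, [/\ e x y, e y z & e x z].

Definition add_edge (T : finType) (e : rel T) (u v : T) : rel T :=
  fun x y => e x y || ((x == u) && (y == v)) || ((x == v) && (y == u)).

Definition K3_saturated (T : finType) (e : rel T) : Prop :=
  ~ has_K3 e /\ (forall u v : T, u != v -> ~~ e u v -> has_K3 (add_edge e u v)).

Definition regular (T : finType) (e : rel T) : Prop :=
  forall x y : T, #|[set z | e x z]| = #|[set z | e y z]|.

From mathcomp Require Import all_boot ssralg finalg zmodp zify.

(* Take the Cayley graph of Z_n joining x and y when their circular distance
   min(d, n - d), d = y - x, lies in [L, 2L), with 6L - 2 <= n <= 8L - 3; as a
   Cayley graph it is regular.  Going once around the circle through the
   vertices of a triangle covers distance n, which is either at most
   3(2L - 1) < n or, if one step goes the long way, at least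
   2L + (n - 2L + 1) > n.  A non-adjacent pair at circular distance d gets a
   common neighbour: at distance L from one endpoint, away from the other, if
   d < L; otherwise the midpoint of the shorter arc if d <= 4L - 2, and of the
   longer one, of length n - d <= 4L - 2, if not. *)

Import GRing.Theory.

Section CayleyGraph.
Local Open Scope ring_scope.
Context {G : finZmodType} (S : {set G}).

Definition cayley : rel G := fun x y => y - x \in S.

Lemma cayley_simple : 0 \notin S -> {in S, forall s, - s \in S} ->
  simple_graph cayley.
Proof.
move=> S0 SN; split=> [x | x y]; first by rewrite /cayley subrr (negbTE S0).
by apply/idP/idP => /SN; rewrite opprB.
Qed.

Lemma card_cayley_nbhd x : #|[set y | cayley x y]| = #|S|.
Proof.
rewrite -(card_preimset S (addIr (- x))); apply: eq_card => y.
by rewrite !inE.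
Qed.

Lemma cayley_regular : regular cayley.
Proof. by move=> x y; rewrite !card_cayley_nbhd. Qed.

Hypothesis S_sum_free : {in S &, forall s t, s + t \notin S}.

Lemma cayley_K3_free : ~ has_K3 cayley.
Proof.
move=> [x [y [z [Sxy Syz]]]]; rewrite /cayley.
have -> : z - x = (z - y) + (y - x) by rewrite addrA subrK.
by apply/negP/S_sum_free.
Qed.

Lemma cayley_K3_saturated :
    (forall d, d != 0 -> d \notin S ->
       exists s t, [/\ s \in S, t \in S & d = s + t]) ->
  K3_saturated cayley.
Proof.
move=> S_sat; split; first exact: cayley_K3_free.
move=> u v uv nSuv.
have [s [t [Ss St Euv]]] : exists s t, [/\ s \in S, t \in S & v - u = s + t].
  by apply: S_sat; rewrite // subr_eq0 eq_sym.
have Suw : cayley u (u + s) by rewrite /cayley addrC addKr.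
have Swv : cayley (u + s) v by rewrite /cayley opprD addrA Euv addrAC subrr add0r.
by exists u, (u + s), v; rewrite /add_edge Suw Swv !eqxx orbT.
Qed.

End CayleyGraph.

Section CircularBand.
Variables n L : nat.

Definition in_band d := L <= minn d (n - d) < 2 * L.

Lemma in_band_subn d : 0 < L -> d < n -> in_band ((n - d) %% n) = in_band d.
Proof.
move=> L_gt0 dn; rewrite /in_band; have [-> | d_gt0] := posnP d.
  by rewrite subn0 modnn; lia.
by rewrite modn_small; lia.
Qed.

Hypotheses (L_gt0 : 0 < L) (n_lb : 6 * L <= n + 2) (n_ub : n + 3 <= 8 * L).

Lemma in_band_sum_free a b : a < n -> b < n -> in_band a -> in_band b ->
  ~~ in_band ((a + b) %% n).
Proof.
move=> an bn; rewrite /in_band modnD ?(modn_small an) ?(modn_small bn); last lia.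
by case: (leqP n (a + b)); lia.
Qed.

Lemma in_band_sum_cover d : 0 < d < n -> ~~ in_band d ->
  exists a b, [/\ a < n, b < n, in_band a, in_band b & (a + b) %% n = d].
Proof.
rewrite /in_band => /andP[d_gt0 dn] d_out.
have sum_mod a b : a < n -> b < n -> a + b = d \/ a + b = d + n -> (a + b) %% n = d.
  by move=> an bn [-> | ->]; rewrite ?modnDr modn_small.
have [dL | Ld] := ltnP d L.
  by exists (d + L), (n - L); split; try lia; apply: sum_mod; lia.
have [ndL | Lnd] := ltnP (n - d) L.
  by exists L, (d - L); split; try lia; apply: sum_mod; lia.
have [d_short | d_long] := leqP d (4 * L - 2).
  by exists (d %/ 2), (d - d %/ 2); split; try lia; apply: sum_mod; lia.
exists (n - (n - d) %/ 2), (n - (n - d - (n - d) %/ 2)); split; try lia.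
by apply: sum_mod; lia.
Qed.

End CircularBand.

Section CirculantBandGraph.
Local Open Scope ring_scope.
Variables m L : nat.
Hypotheses (L_gt0 : (0 < L)%N)
  (n_lb : (6 * L <= m.+1 + 2)%N) (n_ub : (m.+1 + 3 <= 8 * L)%N).

Definition band_set : {set 'I_m.+1} := [set d : 'I_m.+1 | in_band m.+1 L d].

Lemma band_set0 : 0 \notin band_set.
Proof. by rewrite inE /in_band /=; lia. Qed.

Lemma band_setN : {in band_set, forall s, - s \in band_set}.
Proof. by move=> s; rewrite !inE /= in_band_subn. Qed.

Lemma band_set_sum_free : {in band_set &, forall s t, s + t \notin band_set}.
Proof.
move=> s t; rewrite !inE => Ss St.
by move: (in_band_sum_free _ _ L_gt0 n_lb n_ub _ _ (ltn_ord s) (ltn_ord t) Ss St).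
Qed.

Lemma band_set_sum_cover d : d != 0 -> d \notin band_set ->
  exists s t, [/\ s \in band_set, t \in band_set & d = s + t].
Proof.
rewrite inE => d_neq0 d_out.
have d_range : (0 < d < m.+1)%N.
  by rewrite ltn_ord andbT lt0n; apply: contra d_neq0 => /eqP d0; apply/eqP/val_inj.
have [a [b [an bn Sa Sb sum_ab]]] :=
  in_band_sum_cover _ _ L_gt0 n_lb n_ub _ d_range d_out.
by exists (Ordinal an), (Ordinal bn); rewrite !inE Sa Sb; split=> //; apply: val_inj.
Qed.

Lemma band_cayley_K3_saturated :
  [/\ simple_graph (cayley band_set), regular (cayley band_set)
    & K3_saturated (cayley band_set)].
Proof.
split; first exact: cayley_simple band_set0 band_setN.
- exact: cayley_regular.
- exact: cayley_K3_saturated band_set_sum_free band_set_sum_cover.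
Qed.

End CirculantBandGraph.

Theorem theorem1p1 : exists n0 : nat, forall n : nat, n0 <= n ->
  exists e : rel 'I_n, [/\ simple_graph e, regular e & K3_saturated e].
Proof.
exists 22; case=> [|m] // m_large.
exists (cayley (band_set m ((m + 11) %/ 8))).
by apply: band_cayley_K3_saturated; lia.
Qed.
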